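(* $\mathrm{PBTD}(\Pi^\infty)=2$, and for every $m\ge1$, $\mathrm{PBTD}(\Pi^1_{\infty,m})=\Theta(m)$ (as a function of $m$).
   Context: Fix a countably infinite set $X$ of variables and an alphabet $\Sigma$ (finite or countably infinite, disjoint from $X$), $z=|\Sigma|$. A pattern is a nonempty finite string over $X\cup\Sigma$; $\Pi^z$ is the class of all patterns over an alphabet of size $z$ ($\Pi^\infty$: over a countably infinite alphabet). $\Pi^z_{\infty,m}$ is the class of patterns in $\Pi^z$ in which every variable occurs at most $m$ times (no bound on the number of distinct variables). A substitution is a morphism $h:(X\cup\Sigma)^*\to\Sigma^*$ fixing letters; $L(\pi)$ (erasing pattern language) is the set of all $h(\pi)$; patterns with equal languages are identified. A labelled example is $(w,\pm)$ with $w\in\Sigma^*$; a teaching set for $\pi$ w.r.t. a class $\Pi$ is a set $T$ of labelled examples consistent with $\pi$ such that every $\tau\in\Pi$ consistent with $T$ has $L(\tau)=L(\pi)$. For a strict partial order $\prec$ on $\Pi$, a teaching set for $\pi$ w.r.t. $(\Pi,\prec)$ is a teaching set for $\pi$ w.r.t. $\Pi\setminus\{\pi':\pi'\prec\pi\}$; $\mathrm{PBTD}(\Pi,\prec)$ is the supremum over $\pi$ of the minimum size of such sets and $\mathrm{PBTD}(\Pi)=\inf_\prec\mathrm{PBTD}(\Pi,\prec)$. *)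

From Stdlib Require Import List Arith.
Import ListNotations.
Set Implicit Arguments.

Inductive sym (A : Type) : Type :=
| Var : nat -> sym A
| Let : A -> sym A.
Arguments Var {A} _.
Arguments Let {A} _.

Definition pattern (A : Type) := list (sym A).

Definition is_pattern {A : Type} (p : pattern A) : Prop := p <> [].

Fixpoint subst {A : Type} (h : nat -> list A) (p : pattern A) : list A :=
  match p with
  | [] => []
  | Var x :: p' => h x ++ subst h p'
  | Let a :: p' => a :: subst h p'
  end.

Definition lang {A : Type} (p : pattern A) (w : list A) : Prop :=
  exists h : nat -> list A, subst h p = w.

Definition lang_eq {A : Type} (p q : pattern A) : Prop :=
  forall w, lang p w <-> lang q w.

Fixpoint occ {A : Type} (x : nat) (p : pattern A) : nat :=
  match p with
  | [] => 0
  | Var y :: p' => (if Nat.eqb x y then 1 else 0) + occ x p'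
  | Let _ :: p' => occ x p'
  end.

(* Pi^infty : all patterns over a countably infinite alphabet (Sigma = nat). *)
Definition Pi_inf (p : pattern nat) : Prop := is_pattern p.

(* Pi^1_{infty,m} : patterns over a unary alphabet (Sigma = unit), each variable
   occurring at most m times. *)
Definition Pi1_m (m : nat) (p : pattern unit) : Prop :=
  is_pattern p /\ forall x, occ x p <= m.

Definition example (A : Type) := (list A * bool)%type.

Definition consistent {A : Type} (p : pattern A) (T : list (example A)) : Prop :=
  forall w b, In (w, b) T -> (lang p w <-> b = true).

(* A strict partial order on the class C, where patterns with equal languages are
   identified: irreflexive, transitive, and compatible with language equality
   (i.e. a strict partial order on the quotient of C by language equality). *)
Definition strict_po {A : Type} (C : pattern A -> Prop)
  (prec : pattern A -> pattern A -> Prop) : Prop :=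
  (forall p, C p -> ~ prec p p) /\
  (forall p q r, C p -> C q -> C r -> prec p q -> prec q r -> prec p r) /\
  (forall p p' q q', C p -> C p' -> C q -> C q' ->
      lang_eq p p' -> lang_eq q q' -> prec p q -> prec p' q').

Definition teaching_set {A : Type} (C : pattern A -> Prop)
  (prec : pattern A -> pattern A -> Prop) (p : pattern A) (T : list (example A)) : Prop :=
  consistent p T /\
  forall t, C t -> ~ prec t p -> consistent t T -> lang_eq t p.

Definition PBTD_le {A : Type} (C : pattern A -> Prop)
  (prec : pattern A -> pattern A -> Prop) (d : nat) : Prop :=
  forall p, C p -> exists T, length T <= d /\ teaching_set C prec p T.

From Stdlib Require Import List Arith Lia Classical.
Import ListNotations.

(* Upper bounds.  Both use one preference order, [letter_order]: prefer
   patterns with fewer letters and, among those, larger languages.  A pattern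
   that is not preferred to p and whose language contains L(p) generates
   exactly L(p) ([letter_order_teach]), so positive examples forcing
   L(p) <= L(t) suffice.  Over an infinite alphabet two examples do: p with
   every variable replaced by a fresh letter, for two disjoint choices of fresh
   letters; any word of L(p) is then a decoding of the first example.  Over a
   unary alphabet a word is its length and L(p) is nletters p plus the span of
   the occurrence numbers of p ([lang_unary]), so one example per occurrence
   number in 1..m suffices: at most m + 1 <= 2m examples.

   Lower bounds.  For Pi^infty, analysing one-example teaching sets of x, of
   the one-letter patterns and of x x w shows that three one-letter patterns
   would admit no minimal element.  For Pi^1_{infty,m}, a minimality argument
   ([teaching_lower_bound]) applied to the 2^h gap patterns (h = m / 4), whose
   languages differ only at lengths h .. 2h - 1, shows that some pattern needs
   h examples; hence m <= 7 * PBTD. *)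

Lemma subst_app {A : Type} (h : nat -> list A) (p q : pattern A) :
  subst h (p ++ q) = subst h p ++ subst h q.
Proof.
  induction p as [|[x|a] p IH]; simpl; rewrite ?IH; auto using app_assoc.
Qed.

Lemma subst_ext {A : Type} (f g : nat -> list A) (p : pattern A) :
  (forall x, f x = g x) -> subst f p = subst g p.
Proof. intros E; induction p as [|[x|a] p IH]; simpl; congruence. Qed.

Lemma subst_map_Let {A : Type} (h : nat -> list A) (w : list A) :
  subst h (map Let w) = w.
Proof. induction w; simpl; congruence. Qed.

Fixpoint nletters {A : Type} (p : pattern A) : nat :=
  match p with
  | [] => 0
  | Var _ :: p' => nletters p'
  | Let _ :: p' => S (nletters p')
  end.

Lemma nletters_le_subst {A : Type} (h : nat -> list A) (p : pattern A) :
  nletters p <= length (subst h p).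
Proof.
  induction p as [|[x|a] p IH]; simpl; rewrite ?length_app; lia.
Qed.

Lemma length_subst_erase {A : Type} (p : pattern A) :
  length (subst (fun _ => []) p) = nletters p.
Proof. induction p as [|[x|a] p IH]; simpl; auto. Qed.

Lemma lang_subst {A : Type} (h : nat -> list A) (p : pattern A) : lang p (subst h p).
Proof. exists h; reflexivity. Qed.

Lemma lang_nletters {A : Type} (p : pattern A) w : lang p w -> nletters p <= length w.
Proof. intros [h <-]; apply nletters_le_subst. Qed.

Lemma nletters_lang_eq {A : Type} (p q : pattern A) :
  lang_eq p q -> nletters p = nletters q.
Proof.
  intros E.
  pose proof (lang_nletters _ _ (proj1 (E _) (lang_subst (fun _ => []) p))).
  pose proof (lang_nletters _ _ (proj2 (E _) (lang_subst (fun _ => []) q))).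
  rewrite length_subst_erase in *; lia.
Qed.

Definition letter_order {A : Type} (t p : pattern A) : Prop :=
  nletters t < nletters p \/
  (nletters t = nletters p /\ (forall w, lang p w -> lang t w) /\
   ~ (forall w, lang t w -> lang p w)).

Lemma letter_order_strict_po {A : Type} (C : pattern A -> Prop) :
  strict_po C letter_order.
Proof.
  unfold letter_order; split; [|split].
  - intros p _ [H|[_ [_ K]]]; [lia|auto].
  - intros p q r _ _ _ [H|[E [H1 H2]]] [H'|[E' [H1' H2']]]; try (left; lia).
    right; split; [lia|split; [auto|]].
    intro K; apply H2'; intros w Hw; apply K, H1, Hw.
  - intros p p' q q' _ _ _ _ Ep Eq.
    pose proof (nletters_lang_eq _ _ Ep) as Np; pose proof (nletters_lang_eq _ _ Eq) as Nq.
    intros [H|[E [H1 H2]]]; [left; lia|].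
    right; split; [lia|split].
    + intros w Hw; apply Ep, H1, Eq, Hw.
    + intro K; apply H2; intros w Hw; apply Eq, K, Ep, Hw.
Qed.

Lemma letter_order_teach {A : Type} (t p : pattern A) :
  (forall w, lang p w -> lang t w) -> ~ letter_order t p -> lang_eq t p.
Proof.
  intros Inc N.
  pose proof (lang_nletters _ _ (Inc _ (lang_subst (fun _ => []) p))) as Le.
  rewrite length_subst_erase in Le.
  assert (Back : forall w, lang t w -> lang p w).
  { apply NNPP; intro K; apply N.
    destruct (Nat.lt_ge_cases (nletters t) (nletters p)); [left | right]; auto.
    repeat split; auto; lia. }
  intro w; split; auto.
Qed.

Lemma teaching_set_forces_prec {A : Type} (C : pattern A -> Prop) prec p T t :
  teaching_set C prec p T -> C t -> consistent t T -> ~ lang_eq t p -> prec t p.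
Proof.
  intros [_ Teach] Ct Cons Neq.
  apply NNPP; intro N; apply Neq, Teach; auto.
Qed.

Lemma prec_asym {A : Type} (C : pattern A -> Prop) prec p q :
  strict_po C prec -> C p -> C q -> prec p q -> prec q p -> False.
Proof.
  intros [Irr [Tr _]] Cp Cq Hpq Hqp. apply (Irr p Cp), (Tr p q p); auto.
Qed.

Lemma consistent_nil {A : Type} (t : pattern A) : consistent t [].
Proof. intros w b []. Qed.

Lemma consistent_one {A : Type} (t : pattern A) w b :
  (lang t w <-> b = true) -> consistent t [(w, b)].
Proof. intros H w' b' [E|[]]; injection E; intros; subst; auto. Qed.

Lemma exists_minimal {T : Type} (C : T -> Prop) (R : T -> T -> Prop) (l : list T) :
  (forall p, C p -> ~ R p p) ->
  (forall p q r, C p -> C q -> C r -> R p q -> R q r -> R p r) ->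
  l <> [] -> (forall x, In x l -> C x) ->
  exists x, In x l /\ forall y, In y l -> ~ R y x.
Proof.
  intros Irr Tr. induction l as [|a l IH]; intros Hne HC; [congruence|].
  destruct l as [|b l'].
  { exists a; split; [left; auto|]. intros y [<-|[]]; apply Irr, HC; left; auto. }
  destruct IH as [m [Hm Hmin]]; [discriminate|intros; apply HC; right; auto|].
  destruct (classic (R a m)) as [Ram|Nam].
  - exists a; split; [left; auto|]. intros y [<-|Hy]; [apply Irr, HC; left; auto|].
    intros Rya. apply (Hmin y Hy), (Tr y a m); auto; apply HC; simpl; auto.
  - exists m; split; [right; auto|]. intros y [<-|Hy]; auto.
Qed.

Lemma teaching_lower_bound {A : Type} (C : pattern A -> Prop) prec d k
    (F : list (pattern A)) :
  strict_po C prec -> PBTD_le C prec d -> F <> [] -> (forall p, In p F -> C p) ->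
  (forall p T, In p F -> consistent p T -> length T < k ->
     exists q, In q F /\ consistent q T /\ ~ lang_eq q p) ->
  k <= d.
Proof.
  intros [Irr [Tr _]] Dim Hne HF Confuse.
  destruct (exists_minimal C prec F Irr Tr Hne HF) as [p [Hp Hmin]].
  destruct (Dim p (HF p Hp)) as [T [LT [Cons Teach]]].
  apply NNPP; intro Small.
  destruct (Confuse p T Hp Cons ltac:(lia)) as [q [Hq [Cq Nq]]].
  apply Nq, Teach; auto.
Qed.

Fixpoint max_letter (p : pattern nat) : nat :=
  match p with
  | [] => 0
  | Var _ :: p' => max_letter p'
  | Let a :: p' => max a (max_letter p')
  end.

Lemma letter_le_max_letter (p : pattern nat) c : In (Let c) p -> c <= max_letter p.
Proof.
  induction p as [|[x|a] p IH]; simpl; intros H; [contradiction| |].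
  - destruct H as [E|H]; [discriminate|auto].
  - destruct H as [E|H]; [injection E; lia|specialize (IH H); lia].
Qed.

Lemma letter_in_image {A : Type} (h : nat -> list A) t c :
  In (Let c) t -> In c (subst h t).
Proof.
  induction t as [|[x|a] t IH]; simpl; intros H; [contradiction| |].
  - destruct H as [E|H]; [discriminate|auto using in_or_app].
  - destruct H as [E|H]; [injection E; intros ->|]; auto.
Qed.

Lemma image_letter_origin {A : Type} (f : nat -> list A) p c :
  In c (subst f p) -> In (Let c) p \/ exists x, In c (f x).
Proof.
  induction p as [|[x|a] p IH]; simpl; intros H; [tauto| |].
  - apply in_app_or in H as [H|H]; [eauto|]. destruct (IH H); auto.
  - destruct H as [<-|H]; auto. destruct (IH H); auto.
Qed.

Lemma decode_subst (F : nat -> list nat) h t :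
  (forall c, In (Let c) t -> F c = [c]) ->
  flat_map F (subst h t) = subst (fun y => flat_map F (h y)) t.
Proof.
  induction t as [|[x|a] t IH]; simpl; intros H; auto.
  - rewrite flat_map_app, IH; auto.
  - rewrite H by auto; simpl; rewrite IH; auto.
Qed.

(* Decoder for the fresh-letter encoding [x |-> N + 2x]: letters below N are
   kept, the code of variable x is replaced by g x, other letters are erased. *)
Definition decode (g : nat -> list nat) (N c : nat) : list nat :=
  if c <? N then [c] else if Nat.even (c - N) then g (Nat.div2 (c - N)) else [].

Lemma decode_small g N c : c < N -> decode g N c = [c].
Proof. intros H; unfold decode; apply Nat.ltb_lt in H; rewrite H; auto. Qed.

Lemma decode_fresh g N x : decode g N (N + 2 * x) = g x.
Proof.
  unfold decode. rewrite (proj2 (Nat.ltb_ge _ _)) by lia.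
  replace (N + 2 * x - N) with (2 * x) by lia.
  rewrite Nat.even_mul, Nat.div2_double; reflexivity.
Qed.

(* The two positive examples: p with every variable x replaced by the single
   fresh letter N + 2x, resp. N + 2x + 1 (N exceeds all letters of p). *)
Definition fresh_word (p : pattern nat) (parity : nat) : list nat :=
  subst (fun x => [S (max_letter p) + 2 * x + parity]) p.

Lemma fresh_words_bound_letters (p t : pattern nat) :
  lang t (fresh_word p 0) -> lang t (fresh_word p 1) ->
  forall c, In (Let c) t -> c <= max_letter p.
Proof.
  intros [h1 E1] [h2 E2] c Hc.
  pose proof (letter_in_image h1 t c Hc) as A1; rewrite E1 in A1.
  pose proof (letter_in_image h2 t c Hc) as A2; rewrite E2 in A2.
  apply image_letter_origin in A1 as [A1|[x [A1|[]]]];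
    [apply letter_le_max_letter; auto|].
  apply image_letter_origin in A2 as [A2|[y [A2|[]]]];
    [apply letter_le_max_letter; auto|lia].
Qed.

Lemma fresh_word_generalizes (p t : pattern nat) :
  lang t (fresh_word p 0) -> (forall c, In (Let c) t -> c <= max_letter p) ->
  forall w, lang p w -> lang t w.
Proof.
  intros [h E] Ht w [g <-].
  set (N := S (max_letter p)).
  exists (fun y => flat_map (decode g N) (h y)).
  rewrite <- decode_subst by (intros c Hc; apply decode_small, le_n_S, Ht, Hc).
  rewrite E; unfold fresh_word.
  rewrite decode_subst
    by (intros c Hc; apply decode_small, le_n_S, letter_le_max_letter, Hc).
  apply subst_ext; intros x; cbn [flat_map]; rewrite app_nil_r, Nat.add_0_r.
  apply decode_fresh.
Qed.

Lemma Pi_inf_upper : exists prec, strict_po Pi_inf prec /\ PBTD_le Pi_inf prec 2.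
Proof.
  exists letter_order; split; [apply letter_order_strict_po|].
  intros p Hp.
  exists [(fresh_word p 0, true); (fresh_word p 1, true)]; split; [simpl; lia|split].
  - intros w b [E|[E|[]]]; injection E; intros; subst;
      split; auto; intros _; apply lang_subst.
  - intros t _ Nt Ct.
    assert (L0 : lang t (fresh_word p 0)) by (apply (Ct _ true); simpl; auto).
    assert (L1 : lang t (fresh_word p 1)) by (apply (Ct _ true); simpl; auto).
    apply letter_order_teach; auto.
    exact (fresh_word_generalizes p t L0 (fresh_words_bound_letters p t L0 L1)).
Qed.

Definition Xall {A : Type} : pattern A := [Var 0].
Definition single {A : Type} (a : A) : pattern A := [Let a].

Lemma lang_Xall {A : Type} (w : list A) : lang Xall w.
Proof. exists (fun _ => w); simpl; apply app_nil_r. Qed.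

Lemma lang_single {A : Type} (a : A) w : lang (single a) w <-> w = [a].
Proof. split; [intros [h E]; auto | intros ->; exists (fun _ => []); reflexivity]. Qed.

Lemma Xall_not_single {A : Type} (a : A) : ~ lang_eq Xall (single a).
Proof.
  intros E. pose proof (proj1 (E []) (lang_Xall [])) as H.
  apply lang_single in H; discriminate.
Qed.

Lemma single_not_Xall {A : Type} (a : A) : ~ lang_eq (single a) Xall.
Proof.
  intros E. pose proof (proj2 (E []) (lang_Xall [])) as H.
  apply lang_single in H; discriminate.
Qed.

(* The pattern x x w, whose words are u u w: it contains w, but no word of
   length |w| + 1, and it is not a singleton language. *)
Definition doubled (w : list nat) : pattern nat := Var 0 :: Var 0 :: map Let w.

Lemma length_subst_doubled h w :
  length (subst h (doubled w)) = 2 * length (h 0) + length w.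
Proof. simpl; rewrite !length_app, subst_map_Let; lia. Qed.

Lemma lang_doubled w : lang (doubled w) w.
Proof. exists (fun _ => []); simpl; apply subst_map_Let. Qed.

Lemma Xall_not_doubled w : ~ lang_eq Xall (doubled w).
Proof.
  intros E. destruct (proj1 (E (repeat 0 (S (length w)))) (lang_Xall _)) as [h Eh].
  apply (f_equal (@length nat)) in Eh.
  rewrite length_subst_doubled, repeat_length in Eh; lia.
Qed.

Lemma single_not_doubled c w : ~ lang_eq (single c) (doubled w).
Proof.
  intros E.
  pose proof (proj2 (E _) (lang_doubled w)) as E1.
  pose proof (proj2 (E _) (lang_subst (fun _ => [0]) (doubled w))) as E2.
  apply lang_single in E1; apply lang_single in E2.
  apply (f_equal (@length nat)) in E2.
  rewrite length_subst_doubled, E1 in E2; simpl in E2; lia.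
Qed.

Section PiInfLower.

Variable prec : pattern nat -> pattern nat -> Prop.
Hypothesis prec_po : strict_po Pi_inf prec.
Hypothesis dim_one : PBTD_le Pi_inf prec 1.

Lemma small_teaching_set p :
  Pi_inf p -> exists T, (T = [] \/ exists w b, T = [(w, b)]) /\
                        teaching_set Pi_inf prec p T.
Proof.
  intros Hp; destruct (dim_one p Hp) as [[|[w b] [|]] [LT Teach]];
    simpl in LT; try lia; eauto 6.
Qed.

Lemma Xall_teaching_word :
  exists w, forall t, Pi_inf t -> lang t w -> ~ lang_eq t Xall -> prec t Xall.
Proof.
  destruct (small_teaching_set Xall ltac:(discriminate)) as [T [[->|[w [b ->]]] Teach]].
  - exists []; intros t Ht _ N.
    apply (teaching_set_forces_prec _ _ _ _ _ Teach Ht (consistent_nil t) N).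
  - exists w; intros t Ht Lw N.
    assert (b = true) by (apply (proj1 Teach w b); simpl; auto; apply lang_Xall).
    subst b; apply (teaching_set_forces_prec _ _ _ _ _ Teach Ht); auto.
    apply consistent_one; tauto.
Qed.

Definition guarded (c : nat) (w : list nat) : Prop :=
  w <> [c] /\
  forall t, Pi_inf t -> ~ lang t w -> ~ lang_eq t (single c) -> prec t (single c).

Lemma single_cases c : prec Xall (single c) \/ exists w, guarded c w.
Proof.
  destruct (small_teaching_set (single c) ltac:(discriminate))
    as [T [[->|[w [b ->]]] Teach]].
  - left; apply (teaching_set_forces_prec _ _ _ _ _ Teach); auto using
      consistent_nil, Xall_not_single; discriminate.
  - assert (Cons := proj1 Teach w b (or_introl eq_refl)).
    destruct b.
    + left; apply (teaching_set_forces_prec _ _ _ _ _ Teach); auto using Xall_not_single;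
        [discriminate|]. apply consistent_one; split; auto; intros _; apply lang_Xall.
    + right; exists w; split.
      * intros ->. assert (false = true) by (apply Cons, lang_single; auto). discriminate.
      * intros t Ht Nw N. apply (teaching_set_forces_prec _ _ _ _ _ Teach Ht); auto.
        apply consistent_one; split; [tauto|discriminate].
Qed.

Lemma guarded_prec c w d : guarded c w -> d <> c -> w <> [d] -> prec (single d) (single c).
Proof.
  intros [_ G] Hd Hw. apply G; [discriminate| |].
  - intros H; apply lang_single in H; congruence.
  - intros E. pose proof (proj1 (E [d]) (proj2 (lang_single d [d]) eq_refl)) as H.
    apply lang_single in H; congruence.
Qed.

Lemma guarded_has_pred x w y z :
  guarded x w -> y <> x -> z <> x -> y <> z ->
  prec (single y) (single x) \/ prec (single z) (single x).
Proof.
  intros G Hy Hz Hyz.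
  destruct (classic (w = [y])) as [->|Ny]; [right|left]; apply (guarded_prec x _ _ G); auto.
  congruence.
Qed.

(* Three guarded singletons would have no minimal element. *)
Lemma no_three_guarded a b c wa wb wc :
  a <> b -> b <> c -> a <> c -> guarded a wa -> guarded b wb -> guarded c wc -> False.
Proof.
  intros Hab Hbc Hac Ga Gb Gc.
  destruct prec_po as [Irr [Tr _]].
  destruct (exists_minimal Pi_inf prec [single a; single b; single c] Irr Tr)
    as [m [Hm Hmin]]; [discriminate|intros x Hx; simpl in Hx; intuition (subst; discriminate)|].
  simpl in Hm; destruct Hm as [<-|[<-|[<-|[]]]].
  - destruct (guarded_has_pred a wa b c) as [P|P]; auto; eapply Hmin; eauto; simpl; auto.
  - destruct (guarded_has_pred b wb a c) as [P|P]; auto; eapply Hmin; eauto; simpl; auto.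
  - destruct (guarded_has_pred c wc a b) as [P|P]; auto; eapply Hmin; eauto; simpl; auto.
Qed.

(* At most one singleton comes after x: take the teaching word w of x; the
   pattern x x w is preferred to x, so its single example must be negative and
   is compatible with all singletons but one, which then precede x x w. *)
Lemma not_below_Xall_twice c d :
  c <> d -> prec Xall (single c) -> prec Xall (single d) -> False.
Proof.
  intros Hcd Pc Pd.
  destruct prec_po as [Irr [Tr _]].
  destruct Xall_teaching_word as [w Hw].
  assert (Cs : Pi_inf (doubled w)) by discriminate.
  assert (sX : prec (doubled w) Xall).
  { apply Hw; auto using lang_doubled. intros E; apply (Xall_not_doubled w).
    intro u; split; apply E. }
  destruct (small_teaching_set _ Cs) as [T [Shape Teach]].
  assert (NX : ~ consistent Xall T).
  { intros K. apply (prec_asym _ _ (doubled w) Xall prec_po Cs ltac:(discriminate) sX).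
    apply (teaching_set_forces_prec _ _ _ _ _ Teach); auto using Xall_not_doubled.
    discriminate. }
  destruct Shape as [->|[v [b ->]]]; [apply NX, consistent_nil|].
  destruct b; [apply NX, consistent_one; split; auto; intros; apply lang_Xall|].
  assert (Below : forall e, [e] <> v -> prec (single e) (doubled w)).
  { intros e He. apply (teaching_set_forces_prec _ _ _ _ _ Teach);
      auto using single_not_doubled; [discriminate|].
    apply consistent_one; split; [|discriminate].
    intros H; apply lang_single in H; congruence. }
  assert (Cycle : forall e, [e] <> v -> prec Xall (single e) -> False).
  { intros e He Pe. apply (Irr Xall ltac:(discriminate)).
    apply (Tr _ (single e) _); try discriminate; auto.
    apply (Tr _ (doubled w) _); try discriminate; auto. }
  destruct (classic ([c] = v)) as [<-|Nc]; [|exact (Cycle c Nc Pc)].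
  apply (Cycle d); auto. congruence.
Qed.

Lemma guarded_except_one c d :
  prec Xall (single c) -> d <> c -> exists w, guarded d w.
Proof.
  intros Pc Hd. destruct (single_cases d) as [Pd|G]; auto.
  exfalso; apply (not_below_Xall_twice c d); auto.
Qed.

(* Among the singletons 0, 1, 2, 3 at most one comes after x, so three are
   guarded: impossible. *)
Lemma no_dimension_one : False.
Proof.
  destruct (single_cases 0) as [P0|[w0 G0]].
  { destruct (guarded_except_one 0 1 P0) as [w1 G1]; auto.
    destruct (guarded_except_one 0 2 P0) as [w2 G2]; auto.
    destruct (guarded_except_one 0 3 P0) as [w3 G3]; auto.
    apply (no_three_guarded 1 2 3 w1 w2 w3); auto. }
  destruct (single_cases 1) as [P1|[w1 G1]].
  { destruct (guarded_except_one 1 2 P1) as [w2 G2]; auto.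
    destruct (guarded_except_one 1 3 P1) as [w3 G3]; auto.
    apply (no_three_guarded 0 2 3 w0 w2 w3); auto. }
  destruct (single_cases 2) as [P2|[w2 G2]].
  { destruct (guarded_except_one 2 3 P2) as [w3 G3]; auto.
    apply (no_three_guarded 0 1 3 w0 w1 w3); auto. }
  apply (no_three_guarded 0 1 2 w0 w1 w2); auto.
Qed.

End PiInfLower.

Lemma Pi_inf_lower : forall prec, strict_po Pi_inf prec -> ~ PBTD_le Pi_inf prec 1.
Proof. intros prec Hpo Hdim. exact (no_dimension_one prec Hpo Hdim). Qed.

Lemma unit_words_eq (w w' : list unit) : length w = length w' -> w = w'.
Proof.
  revert w'; induction w as [|[] w IH]; intros [|[] w'] H; simpl in *; try lia; auto.
  f_equal; apply IH; lia.
Qed.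

Fixpoint sum_below (B : nat) (f : nat -> nat) : nat :=
  match B with 0 => 0 | S B' => sum_below B' f + f B' end.

Lemma sum_below_ext B f g : (forall y, y < B -> f y = g y) -> sum_below B f = sum_below B g.
Proof. induction B; simpl; intros H; auto. rewrite IHB, H; auto. Qed.

Lemma sum_below_add B f g : sum_below B (fun y => f y + g y) = sum_below B f + sum_below B g.
Proof. induction B; simpl; lia. Qed.

Lemma sum_below_zero B : sum_below B (fun _ => 0) = 0.
Proof. induction B; simpl; lia. Qed.

Lemma sum_below_indicator B x f :
  x < B -> sum_below B (fun y => (if Nat.eqb y x then 1 else 0) * f y) = f x.
Proof.
  induction B; simpl; intros H; [lia|].
  destruct (Nat.eqb_spec B x) as [->|Nx].
  - rewrite (sum_below_ext _ _ (fun _ => 0)), sum_below_zero; [lia|].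
    intros y Hy; destruct (Nat.eqb_spec y x); lia.
  - rewrite IHB by lia; lia.
Qed.

Definition in_span (g : nat -> nat) (B n : nat) : Prop :=
  exists c, n = sum_below B (fun i => g i * c i).

Lemma in_span_zero g B : in_span g B 0.
Proof.
  exists (fun _ => 0). rewrite (sum_below_ext _ _ (fun _ => 0)), sum_below_zero; auto; lia.
Qed.

Lemma in_span_generator g B j : j < B -> in_span g B (g j).
Proof.
  intros Hj. exists (fun i => if Nat.eqb i j then 1 else 0).
  rewrite <- (sum_below_indicator B j g Hj) at 1. apply sum_below_ext; intros; lia.
Qed.

Lemma in_span_add g B n n' : in_span g B n -> in_span g B n' -> in_span g B (n + n').
Proof.
  intros [c ->] [c' ->]. exists (fun i => c i + c' i).
  rewrite <- sum_below_add. apply sum_below_ext; intros; lia.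
Qed.

Lemma in_span_mul g B n k : in_span g B n -> in_span g B (n * k).
Proof.
  intros Hn. induction k; [rewrite Nat.mul_0_r; apply in_span_zero|].
  replace (n * S k) with (n + n * k) by lia. apply in_span_add; auto.
Qed.

Lemma in_span_combination g B f B' c :
  (forall y, in_span g B (f y)) -> in_span g B (sum_below B' (fun y => f y * c y)).
Proof.
  intros Hf. induction B'; simpl; [apply in_span_zero|].
  apply in_span_add; auto using in_span_mul.
Qed.

Lemma length_subst {A : Type} (h : nat -> list A) (p : pattern A) B :
  (forall y, B <= y -> occ y p = 0) ->
  length (subst h p) = nletters p + sum_below B (fun y => occ y p * length (h y)).
Proof.
  induction p as [|[x|a] p IH]; intros HB.
  - simpl; now rewrite sum_below_zero.
  - cbn [subst nletters]. assert (Hx : x < B).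
    { destruct (Nat.lt_ge_cases x B) as [|Le]; auto.
      specialize (HB x Le); simpl in HB; rewrite Nat.eqb_refl in HB; lia. }
    rewrite length_app, IH
      by (intros y Hy; specialize (HB y Hy); simpl in HB; destruct (y =? x); lia).
    assert (Split : sum_below B (fun y => occ y (Var x :: p) * length (h y)) =
                    length (h x) + sum_below B (fun y => occ y p * length (h y))).
    { rewrite <- (sum_below_indicator B x (fun y => length (h y))), <- sum_below_add by auto.
      apply sum_below_ext; intros y _; apply Nat.mul_add_distr_r. }
    rewrite Split; lia.
  - simpl; rewrite IH; auto.
Qed.

Lemma lang_unary (p : pattern unit) B w :
  (forall y, B <= y -> occ y p = 0) ->
  lang p w <-> exists n, length w = nletters p + n /\ in_span (fun y => occ y p) B n.
Proof.
  intros HB; split.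
  - intros [h <-]. rewrite (length_subst h p B HB).
    eexists; split; [reflexivity|]. exists (fun y => length (h y)); auto.
  - intros [n [Hw [c ->]]]. exists (fun y => repeat tt (c y)).
    apply unit_words_eq. rewrite (length_subst _ p B HB), Hw.
    f_equal; apply sum_below_ext; intros; rewrite repeat_length; auto.
Qed.

Fixpoint max_var {A : Type} (p : pattern A) : nat :=
  match p with
  | [] => 0
  | Var x :: p' => max x (max_var p')
  | Let _ :: p' => max_var p'
  end.

Lemma occ_above_max_var {A : Type} (p : pattern A) y : max_var p < y -> occ y p = 0.
Proof.
  induction p as [|[x|a] p IH]; simpl; intros H; auto.
  destruct (Nat.eqb_spec y x); [lia|apply IH; lia].
Qed.

Lemma occ_below_max_var {A : Type} (p : pattern A) :
  forall y, S (max_var p) <= y -> occ y p = 0.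
Proof. intros y Hy; apply occ_above_max_var; lia. Qed.

(* Positive examples of lengths nletters p and nletters p + g, for every
   g in 1..m that is the number of occurrences of some variable of p. *)
Definition occurrence_examples (m : nat) (p : pattern unit) : list (example unit) :=
  (repeat tt (nletters p), true) ::
  map (fun g => (repeat tt (nletters p + g), true))
    (filter (fun g => existsb (fun x => Nat.eqb (occ x p) g) (seq 0 (S (max_var p))))
       (seq 1 m)).

Lemma occurrence_examples_length m p : length (occurrence_examples m p) <= S m.
Proof.
  unfold occurrence_examples; cbn [length]; rewrite length_map. apply le_n_S.
  etransitivity; [apply filter_length_le|]. rewrite length_seq; auto.
Qed.

Lemma occurrence_examples_positive m p w b :
  In (w, b) (occurrence_examples m p) -> b = true /\ lang p w.
Proof.
  assert (Len : forall n, in_span (fun y => occ y p) (S (max_var p)) n ->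
                lang p (repeat tt (nletters p + n))).
  { intros n Hn; apply (lang_unary p _ _ (occ_below_max_var p)).
    exists n; rewrite repeat_length; auto. }
  intros [E|Hin].
  - injection E; intros <- <-; split; auto.
    rewrite <- (Nat.add_0_r (nletters p)); apply Len, in_span_zero.
  - apply in_map_iff in Hin as [g [E Hg]]; injection E; intros <- <-; split; auto.
    apply filter_In in Hg as [_ Hg]; apply existsb_exists in Hg as [x [Hx Ex]].
    apply Nat.eqb_eq in Ex as <-. apply Len, (in_span_generator (fun y => occ y p)).
    apply in_seq in Hx; lia.
Qed.

(* A pattern with as many letters as p generating all examples generates L(p):
   its span contains every occurrence number of p, hence their combinations. *)
Lemma occurrence_examples_generalize m (p t : pattern unit) :
  (forall x, occ x p <= m) -> nletters t = nletters p ->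
  (forall w b, In (w, b) (occurrence_examples m p) -> lang t w) ->
  forall w, lang p w -> lang t w.
Proof.
  intros Hm Nt Ex.
  set (span_t := in_span (fun y => occ y t) (S (max_var t))).
  assert (Occ : forall x, span_t (occ x p)).
  { intros x. destruct (Nat.eq_dec (occ x p) 0) as [->|Nz]; [apply in_span_zero|].
    assert (Hx : x <= max_var p)
      by (destruct (Nat.le_gt_cases x (max_var p)); auto;
          exfalso; apply Nz, occ_above_max_var; auto).
    assert (Lt : lang t (repeat tt (nletters p + occ x p))).
    { apply (Ex _ true); right. apply in_map_iff; exists (occ x p); split; auto.
      apply filter_In; split; [apply in_seq; specialize (Hm x); lia|].
      apply existsb_exists; exists x; split; [apply in_seq; lia|apply Nat.eqb_refl]. }
    apply (lang_unary t _ _ (occ_below_max_var t)) in Lt as [n [Hn Sn]].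
    rewrite repeat_length, Nt in Hn. replace (occ x p) with n by lia; auto. }
  intros w Hw.
  apply (lang_unary p _ _ (occ_below_max_var p)) in Hw as [n [Hn [c ->]]].
  apply (lang_unary t _ _ (occ_below_max_var t)).
  exists (sum_below (S (max_var p)) (fun i => occ i p * c i)); split; [lia|].
  apply in_span_combination; auto.
Qed.

Lemma Pi1_upper m :
  1 <= m -> exists prec, strict_po (Pi1_m m) prec /\ PBTD_le (Pi1_m m) prec (2 * m).
Proof.
  intros Hm. exists letter_order; split; [apply letter_order_strict_po|].
  intros p [_ Hocc]. exists (occurrence_examples m p); split.
  { pose proof (occurrence_examples_length m p); lia. }
  split.
  { intros w b Hin; destruct (occurrence_examples_positive m p w b Hin) as [-> L]; tauto. }
  intros t _ Nt Ct.
  assert (Ex : forall w b, In (w, b) (occurrence_examples m p) -> lang t w).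
  { intros w b Hin. apply (Ct w b Hin), (occurrence_examples_positive m p w b Hin). }
  assert (Le : nletters t <= nletters p).
  { rewrite <- (repeat_length tt (nletters p)).
    apply lang_nletters, (Ex _ true); left; auto. }
  apply letter_order_teach; auto.
  apply (occurrence_examples_generalize m); auto.
  destruct (Nat.lt_ge_cases (nletters t) (nletters p)); [|lia].
  exfalso; apply Nt; left; auto.
Qed.

Fixpoint occ_pattern (g : nat -> nat) (N : nat) : pattern unit :=
  match N with
  | 0 => []
  | S N' => occ_pattern g N' ++ repeat (Var N') (g N')
  end.

Lemma occ_app {A : Type} x (p q : pattern A) : occ x (p ++ q) = occ x p + occ x q.
Proof. induction p as [|[y|a] p IH]; simpl; auto; rewrite IH; lia. Qed.

Lemma occ_repeat {A : Type} x i k :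
  occ (A := A) x (repeat (Var i) k) = if Nat.eqb x i then k else 0.
Proof. induction k; simpl; [destruct (Nat.eqb x i); auto|]. rewrite IHk; destruct (Nat.eqb x i); lia. Qed.

Lemma occ_occ_pattern g N x : occ x (occ_pattern g N) = if x <? N then g x else 0.
Proof.
  induction N; simpl; auto. rewrite occ_app, occ_repeat, IHN.
  destruct (Nat.ltb_spec x N), (Nat.ltb_spec x (S N)), (Nat.eqb_spec x N); subst; lia.
Qed.

Lemma nletters_occ_pattern g N : nletters (occ_pattern g N) = 0.
Proof.
  rewrite <- length_subst_erase. induction N; simpl; auto.
  rewrite subst_app, length_app, IHN. induction (g N); simpl; auto.
Qed.

Lemma lang_occ_pattern g N w : lang (occ_pattern g N) w <-> in_span g N (length w).
Proof.
  assert (Vars : forall y, N <= y -> occ y (occ_pattern g N) = 0).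
  { intros y Hy; rewrite occ_occ_pattern, (proj2 (Nat.ltb_ge y N) Hy); auto. }
  assert (Occ : forall c, sum_below N (fun i => occ i (occ_pattern g N) * c i) =
                          sum_below N (fun i => g i * c i)).
  { intros c; apply sum_below_ext; intros i Hi.
    rewrite occ_occ_pattern, (proj2 (Nat.ltb_lt i N) Hi); auto. }
  rewrite (lang_unary _ N w Vars), nletters_occ_pattern.
  split.
  - intros [n [-> [c ->]]]; exists c; apply Occ.
  - intros [c Hc]; exists (length w); split; auto; exists c; rewrite Hc; symmetry; apply Occ.
Qed.

(* Every variable occurs < 4h times. *)
Definition gap_occ (h : nat) (l : list bool) (i : nat) : nat :=
  if i <? h then (if nth i l false then h + i else 0) else h + i.

Definition gap_pattern (h : nat) (l : list bool) : pattern unit :=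
  occ_pattern (gap_occ h l) (3 * h).

Definition gap_member (h : nat) (l : list bool) (n : nat) : Prop :=
  n = 0 \/ (exists k, k < h /\ nth k l false = true /\ n = h + k) \/ 2 * h <= n.

Lemma small_combination h g c N :
  (forall i, g i = 0 \/ h <= g i) ->
  sum_below N (fun i => g i * c i) < 2 * h ->
  sum_below N (fun i => g i * c i) = 0 \/
  exists i, i < N /\ g i <> 0 /\ sum_below N (fun i => g i * c i) = g i.
Proof.
  intros Hg. induction N; simpl; intros Hs; [auto|].
  destruct (Nat.eq_dec (g N * c N) 0) as [Z|Z].
  - rewrite Z, Nat.add_0_r in *. destruct (IHN Hs) as [E|[i [Hi [Ni E]]]]; auto.
    right; exists i; repeat split; auto.
  - assert (h <= g N) by (destruct (Hg N); nia).
    assert (1 <= c N) by nia.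
    destruct (IHN ltac:(nia)) as [E|[i [Hi [Ni E]]]].
    + right; exists N; split; [lia|split; [nia|]]. rewrite E.
      destruct (c N) as [|[|cc]]; nia.
    + exfalso. destruct (Hg i); nia.
Qed.

(* The generators h + i, h <= i < 3h, cover [2h, 4h), hence every n >= 2h. *)
Lemma large_in_span h g n :
  1 <= h -> (forall i, h <= i < 3 * h -> g i = h + i) -> 2 * h <= n -> in_span g (3 * h) n.
Proof.
  intros Hh Hg. induction n as [n IH] using (well_founded_induction lt_wf). intros Hn.
  destruct (Nat.lt_ge_cases n (4 * h)) as [L|L].
  - replace n with (g (n - h)) by (rewrite Hg; lia). apply in_span_generator; lia.
  - replace n with ((n - 2 * h) + g h) by (rewrite Hg; lia).
    apply in_span_add; [apply IH; lia|apply in_span_generator; lia].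
Qed.

Lemma lang_gap_pattern h l w :
  1 <= h -> lang (gap_pattern h l) w <-> gap_member h l (length w).
Proof.
  intros Hh. unfold gap_pattern; rewrite lang_occ_pattern.
  assert (Gi : forall i, gap_occ h l i = 0 \/ h <= gap_occ h l i).
  { intros i; unfold gap_occ; destruct (i <? h), (nth i l false); lia. }
  unfold gap_member; split.
  - intros [c Hc]. destruct (Nat.lt_ge_cases (length w) (2 * h)) as [L|L]; [|auto].
    rewrite Hc in L |- *.
    destruct (small_combination h _ c _ Gi L) as [Z|[i [Hi [Ni E]]]]; [auto|].
    rewrite E in L |- *. right; left; exists i. unfold gap_occ in *.
    destruct (i <? h) eqn:Lt; [apply Nat.ltb_lt in Lt|apply Nat.ltb_ge in Lt; lia].
    destruct (nth i l false); [auto|lia].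
  - intros [->|[[k [Hk [Bk ->]]]|L]].
    + apply in_span_zero.
    + replace (h + k) with (gap_occ h l k)
        by (unfold gap_occ; rewrite (proj2 (Nat.ltb_lt k h) Hk), Bk; auto).
      apply in_span_generator; lia.
    + apply large_in_span; auto.
      intros i Hi; unfold gap_occ; rewrite (proj2 (Nat.ltb_ge i h)); lia.
Qed.

Lemma gap_pattern_in_class h m l : 1 <= h -> 4 * h <= S m -> Pi1_m m (gap_pattern h l).
Proof.
  intros Hh Hm; split.
  - intros E. assert (Occ : occ h (gap_pattern h l) = 0) by (rewrite E; reflexivity).
    unfold gap_pattern, gap_occ in Occ; rewrite occ_occ_pattern in Occ.
    rewrite (proj2 (Nat.ltb_lt h (3 * h))), (proj2 (Nat.ltb_ge h h)) in Occ; lia.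
  - intros x. unfold gap_pattern; rewrite occ_occ_pattern.
    destruct (Nat.ltb_spec x (3 * h)); [|lia].
    unfold gap_occ. destruct (x <? h), (nth x l false); lia.
Qed.

Lemma gap_member_middle h l k :
  1 <= h -> k < h -> gap_member h l (h + k) <-> nth k l false = true.
Proof.
  intros Hh Hk; unfold gap_member; split.
  - intros [E|[[j [_ [Bj E]]]|L]]; [lia| |lia].
    replace k with j by lia; auto.
  - intros Bk; right; left; exists k; auto.
Qed.

Definition flip_bit (k : nat) (l : list bool) : list bool :=
  map (fun i => if Nat.eqb i k then negb (nth i l false) else nth i l false)
    (seq 0 (length l)).

Lemma length_flip_bit k l : length (flip_bit k l) = length l.
Proof. unfold flip_bit; rewrite length_map, length_seq; auto. Qed.

Lemma nth_flip_bit k l i :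
  i < length l ->
  nth i (flip_bit k l) false = if Nat.eqb i k then negb (nth i l false) else nth i l false.
Proof.
  intros Hi. unfold flip_bit.
  set (f := fun i => if Nat.eqb i k then negb (nth i l false) else nth i l false).
  rewrite (nth_indep _ false (f 0)) by (rewrite length_map, length_seq; auto).
  rewrite map_nth, seq_nth; auto.
Qed.

Lemma gap_member_flip_at h l k :
  1 <= h -> k < h -> length l = h ->
  (gap_member h l (h + k) <-> ~ gap_member h (flip_bit k l) (h + k)).
Proof.
  intros Hh Hk Hl. rewrite !gap_member_middle, nth_flip_bit, Nat.eqb_refl by lia.
  destruct (nth k l false); simpl; intuition discriminate.
Qed.

Lemma gap_member_flip_other h l k n :
  length l = h -> n <> h + k ->
  (gap_member h l n <-> gap_member h (flip_bit k l) n).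
Proof.
  intros Hl Hn.
  assert (Same : forall j, j < h -> n = h + j -> nth j (flip_bit k l) false = nth j l false).
  { intros j Hj ->. rewrite nth_flip_bit by lia.
    destruct (Nat.eqb_spec j k); [subst; lia|auto]. }
  unfold gap_member; split; intros [E|[[j [Hj [Bj E]]]|L]]; auto;
    right; left; exists j; rewrite ?Same in *; auto.
Qed.

Fixpoint all_bits (n : nat) : list (list bool) :=
  match n with
  | 0 => [[]]
  | S n' => flat_map (fun l => [true :: l; false :: l]) (all_bits n')
  end.

Lemma in_all_bits n l : In l (all_bits n) <-> length l = n.
Proof.
  revert l; induction n; intros l; simpl.
  - split; [intros [<-|[]]; auto|destruct l; simpl; auto; discriminate].
  - rewrite in_flat_map; split.
    + intros [l' [H1 [<-|[<-|[]]]]]; simpl; f_equal; apply IHn; auto.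
    + destruct l as [|b l]; simpl; [discriminate|intros E].
      exists l; split; [apply IHn; lia|destruct b; simpl; auto].
Qed.

Lemma missing_length h (T : list (example unit)) :
  length T < h -> exists k, k < h /\ forall w b, In (w, b) T -> length w <> h + k.
Proof.
  intros LT. apply NNPP; intros N.
  assert (Inc : incl (seq h h) (map (fun e : example unit => length (fst e)) T)).
  { intros n Hn. apply in_seq in Hn. apply NNPP; intros Nn. apply N.
    exists (n - h); split; [lia|]. intros w b Hwb E. apply Nn, in_map_iff.
    exists (w, b); split; auto; simpl; lia. }
  apply NoDup_incl_length in Inc; [|apply seq_NoDup].
  rewrite length_seq, length_map in Inc; lia.
Qed.

Lemma gap_confusion h l T :
  1 <= h -> length l = h -> consistent (gap_pattern h l) T -> length T < h ->
  exists q, In q (map (gap_pattern h) (all_bits h)) /\ consistent q T /\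
            ~ lang_eq q (gap_pattern h l).
Proof.
  intros Hh Hl Cons LT.
  destruct (missing_length h T LT) as [k [Hk Miss]].
  exists (gap_pattern h (flip_bit k l)); split; [|split].
  - apply in_map, in_all_bits; rewrite length_flip_bit; auto.
  - intros w b Hwb. rewrite <- (Cons w b Hwb), !lang_gap_pattern by auto.
    symmetry; apply gap_member_flip_other; eauto.
  - intros E. specialize (E (repeat tt (h + k))).
    rewrite !lang_gap_pattern, repeat_length in E by auto.
    pose proof (gap_member_flip_at h l k Hh Hk Hl). tauto.
Qed.

Lemma Pi1_Xall m : 1 <= m -> Pi1_m m Xall.
Proof. intros Hm; split; [discriminate|intros x; simpl; destruct (Nat.eqb x 0); lia]. Qed.

Lemma Pi1_single m : Pi1_m m (single tt).
Proof. split; [discriminate|intros x; simpl; lia]. Qed.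

(* The empty sample does not separate x from the letter pattern, so every
   pattern needs at least one example. *)
Lemma Pi1_dimension_positive m prec d :
  1 <= m -> strict_po (Pi1_m m) prec -> PBTD_le (Pi1_m m) prec d -> 1 <= d.
Proof.
  intros Hm Hpo Hdim.
  apply (teaching_lower_bound _ prec d 1 [Xall; single tt] Hpo Hdim); [discriminate| |].
  - intros p [<-|[<-|[]]]; auto using Pi1_Xall, Pi1_single.
  - intros p [|e T] Hp _ LT; [|simpl in LT; lia].
    destruct Hp as [<-|[<-|[]]].
    + exists (single tt); simpl; auto using consistent_nil, single_not_Xall.
    + exists Xall; simpl; auto using consistent_nil, Xall_not_single.
Qed.

Lemma Pi1_dimension_ge_gap m prec d h :
  1 <= h -> 4 * h <= S m ->
  strict_po (Pi1_m m) prec -> PBTD_le (Pi1_m m) prec d -> h <= d.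
Proof.
  intros Hh Hm Hpo Hdim.
  apply (teaching_lower_bound _ prec d h (map (gap_pattern h) (all_bits h)) Hpo Hdim).
  - intros E; apply map_eq_nil in E.
    pose proof (proj2 (in_all_bits h (repeat true h)) (repeat_length _ _)) as H.
    rewrite E in H; destruct H.
  - intros p Hp; apply in_map_iff in Hp as [l [<- _]]; apply gap_pattern_in_class; auto.
  - intros p T Hp Cons LT. apply in_map_iff in Hp as [l [<- Hl]].
    apply in_all_bits in Hl. apply gap_confusion; auto.
Qed.

Lemma Pi1_lower m prec d :
  1 <= m -> strict_po (Pi1_m m) prec -> PBTD_le (Pi1_m m) prec d -> m <= 7 * d.
Proof.
  intros Hm Hpo Hdim.
  pose proof (Pi1_dimension_positive m prec d Hm Hpo Hdim).
  destruct (Nat.lt_ge_cases m 4); [lia|].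
  pose proof (Nat.div_mod m 4 ltac:(lia)); pose proof (Nat.mod_upper_bound m 4 ltac:(lia)).
  pose proof (Pi1_dimension_ge_gap m prec d (m / 4) ltac:(lia) ltac:(lia) Hpo Hdim).
  lia.
Qed.

Theorem mainTheorem14 :
  (* PBTD(Pi^infty) = 2 *)
  ((exists prec, strict_po Pi_inf prec /\ PBTD_le Pi_inf prec 2) /\
   (forall prec, strict_po Pi_inf prec -> ~ PBTD_le Pi_inf prec 1)) /\
  (* PBTD(Pi^1_{infty,m}) = Theta(m) *)
  (exists a b : nat, 1 <= a /\ 1 <= b /\
     forall m : nat, 1 <= m ->
       (exists prec, strict_po (Pi1_m m) prec /\ PBTD_le (Pi1_m m) prec (b * m)) /\
       (forall prec d, strict_po (Pi1_m m) prec -> PBTD_le (Pi1_m m) prec d ->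
          m <= a * d)).
Proof.
  split; [split; [exact Pi_inf_upper | exact Pi_inf_lower]|].
  exists 7, 2; split; [lia|split; [lia|]].
  intros m Hm; split; [exact (Pi1_upper m Hm)|].
  intros prec d Hpo Hdim; exact (Pi1_lower m prec d Hm Hpo Hdim).
Qed.
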